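(* Let $\sigma\in S_n$, let $X$ be a metric space, let $A,B\subseteq X$ be disjoint nonempty closed subsets, and let $\lambda_1,\dots,\lambda_n:X\to\mathbb{C}$ be continuous. Then there exists a continuous map $v:X\to\mathcal{U}(\mathrm{M}_n)$ (a unitary in $\mathrm{M}_n(\mathrm{C}(X))$) such that (i) $v(x)=1_n$ for all $x\in A$; (ii) $v(x)=U[\sigma]$ for all $x\in B$; and (iii) $v(x)$ commutes with $\mathrm{diag}(\lambda_1(x),\dots,\lambda_n(x))$ whenever $\lambda_i(x)=\lambda_{\sigma(i)}(x)$ for every $i\in\{1,\dots,n\}$.
   Context: $\mathcal{U}(\mathrm{M}_n)$ is the unitary group of $\mathrm{M}_n$. For $\pi\in S_n$, $U[\pi]$ denotes the permutation matrix obtained from the identity matrix of $\mathrm{M}_n$ by moving the $i$-th row to the $\pi(i)$-th row, for each $i$. *)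

From HB Require Import structures.
From mathcomp Require Import all_boot all_order all_algebra all_fingroup.
From mathcomp Require Import all_classical all_reals all_analysis.
From mathcomp Require Import complex.
Set Implicit Arguments. Unset Strict Implicit. Unset Printing Implicit Defensive.
Import Order.TTheory GRing.Theory Num.Theory.
Import numFieldTopology.Exports numFieldNormedType.Exports.
Local Open Scope ring_scope.
Local Open Scope complex_scope.

Definition adjmx (R : rcfType) (n : nat) (M : 'M[R[i]]_n) : 'M[R[i]]_n :=
  (map_mx (fun z : R[i] => z^*%C) M)^T.

Definition unitary_mx (R : rcfType) (n : nat) (U : 'M[R[i]]_n) : Prop :=
  U *m adjmx U = 1%:M /\ adjmx U *m U = 1%:M.

(** U[pi]: the identity with its i-th row moved to row pi(i), for each i;
    i.e. U[pi]_{k j} = 1 iff k = pi(j). *)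
Definition Uperm {R : ringType} (n : nat) (s : 'S_n) : 'M[R]_n :=
  \matrix_(k, j) ((k == s j)%:R).

Definition diagC (R : rcfType) (n : nat) (l : 'I_n -> R[i]) : 'M[R[i]]_n :=
  diag_mx (\row_j l j).

(** The standard (norm-induced) topology on R[i], copied from the regular
    numDomain instance (this is the same instance that numFieldTopology
    gives to any numClosedFieldType). *)
HB.instance Definition _ (R : rcfType) :=
  PseudoPointedMetric.copy R[i] (R[i])^o.

From HB Require Import structures.
From mathcomp Require Import all_boot all_order all_algebra all_fingroup.
From mathcomp Require Import all_classical all_reals all_analysis.
From mathcomp Require Import complex ring.
Import Order.TTheory GRing.Theory Num.Theory.
Import numFieldTopology.Exports numFieldNormedType.Exports.
Local Open Scope classical_set_scope.
Local Open Scope ring_scope.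
Local Open Scope complex_scope.

(* Compose a Urysohn function f (f = 0 on A, f = 1 on B) with a path on the
   unit circle from 1 to -1: this gives a continuous unimodular z with z = 1 on
   A and z = -1 on B.  For a transposition (a b), the unitary 1 + (z - 1) P,
   where P projects onto the line of e_a - e_b, is 1 where z = 1, is U[(a b)]
   where z = -1, and commutes with diag(lambda) wherever lambda_a = lambda_b.
   Peel off sigma as a product of transpositions (a, sigma a), each swapping a
   point with its image under the remaining permutation, and multiply the
   corresponding unitaries: a sigma-invariant lambda is invariant under each
   remaining permutation, so lambda_a = lambda_(sigma a) at every step. *)

Lemma perm_tperm_ind (T : finType) (P : {perm T} -> Prop) :
  P 1%g ->
  (forall (s : {perm T}) a, s a != a -> P (s * tperm a (s a))%g -> P s) ->
  forall s, P s.
Proof.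
move=> P1 PM s; have [m] := ubnP #|[pred k | s k != k]|.
elim: m s => // m IHm s /ltnSE le_s_m.
have [a sa|s_id] := pickP (fun k => s k != k); last first.
  suff -> : s = 1%g by [].
  by apply/permP => k; apply/eqP/idPn; rewrite perm1 s_id.
apply: (PM _ a sa); apply: IHm; apply: leq_trans le_s_m.
rewrite [ltnRHS](cardD1 a) inE /= sa ltnS.
apply: subset_leq_card; apply/fintype.subsetP => k.
rewrite !inE permM; have [->|ka] := eqVneq k a; first by rewrite tpermR eqxx.
apply: contraNN => /eqP skk; rewrite skk tpermD // eq_sym // -{1}skk.
by rewrite (inj_eq perm_inj).
Qed.

Section Uperm.
Context {R : ringType} {n : nat}.

Lemma Uperm1 : Uperm 1 = 1%:M :> 'M[R]_n.
Proof. by apply/matrixP => k l; rewrite !mxE perm1 eq_sym. Qed.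

Lemma UpermM (s t : 'S_n) : Uperm (s * t) = Uperm t *m Uperm s :> 'M[R]_n.
Proof.
apply/matrixP => k l; rewrite !mxE (bigD1 (s l)) //= big1 ?addr0.
  by rewrite !mxE permM eqxx mulr1.
by move=> m /negPf ml; rewrite !mxE eq_sym ml mulr0.
Qed.

End Uperm.

Section Unitary.
Context {R : rcfType} {n : nat}.

Lemma adjmxM (A B : 'M[R[i]]_n) : adjmx (A *m B) = adjmx B *m adjmx A.
Proof. by rewrite /adjmx map_mxM trmx_mul. Qed.

Lemma adjmx1 : adjmx (1%:M : 'M[R[i]]_n) = 1%:M.
Proof. by rewrite /adjmx map_mx1 trmx1. Qed.

Lemma unitary_mx1 : unitary_mx (1%:M : 'M[R[i]]_n).
Proof. by rewrite /unitary_mx adjmx1 mulmx1. Qed.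

Lemma unitary_mxM (U V : 'M[R[i]]_n) :
  unitary_mx U -> unitary_mx V -> unitary_mx (U *m V).
Proof.
move=> [U1 U2] [V1 V2]; rewrite /unitary_mx adjmxM; split.
  by rewrite mulmxA -(mulmxA U) V1 mulmx1 U1.
by rewrite mulmxA -(mulmxA _ (adjmx U)) U2 mulmx1 V2.
Qed.

End Unitary.

Section SwapTwist.
Context {F : numFieldType} {n : nat}.
Variables a b : 'I_n.
Hypothesis ab : a != b.

Definition swap_coord (k : 'I_n) : F := (k == a)%:R - (k == b)%:R.

Definition swap_vec : 'cV[F]_n := \col_k swap_coord k.

Definition swap_proj : 'M[F]_n := 2^-1 *: (swap_vec *m swap_vec^T).

Definition swap_twist (z : F) : 'M[F]_n := 1%:M + (z - 1) *: swap_proj.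

Lemma swap_projE k l : swap_proj k l = 2^-1 * (swap_coord k * swap_coord l).
Proof. by rewrite !mxE big_ord1 !mxE. Qed.

Lemma swap_twistE z k l :
  swap_twist z k l = (k == l)%:R + (z - 1) * swap_proj k l.
Proof. by rewrite !mxE. Qed.

Lemma swap_vec_norm : swap_vec^T *m swap_vec = 2%:M.
Proof.
apply/matrixP => i j; rewrite !ord1 !mxE (bigD1 a) // (bigD1 b) 1?eq_sym //=.
rewrite big1 => [|k /andP[/negPf ka /negPf kb]]; last first.
  by rewrite !mxE /swap_coord ka kb subrr mulr0.
rewrite !mxE /swap_coord !eqxx (negPf ab) eq_sym (negPf ab).
by rewrite subr0 sub0r mulr1 mulrNN mulr1 addr0.
Qed.

Lemma swap_projK : swap_proj *m swap_proj = swap_proj.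
Proof.
rewrite /swap_proj -scalemxAl -scalemxAr scalerA !mulmxA -(mulmxA swap_vec).
rewrite swap_vec_norm mul_mx_scalar -scalemxAl scalerA; congr (_ *: _).
by rewrite -mulrA mulVf ?mulr1 // pnatr_eq0.
Qed.

Lemma swap_twistM z w : swap_twist z *m swap_twist w = swap_twist (z * w).
Proof.
(* Generalizing swap_proj keeps rewriting from unfolding it. *)
rewrite /swap_twist; move: swap_projK; move: swap_proj => P PP.
rewrite mulmxDl !mulmxDr !mul1mx !mulmx1 -scalemxAl -scalemxAr PP scalerA.
by rewrite -addrA -!scalerDl; congr (_ + _ *: _); ring.
Qed.

Lemma swap_twist1 : swap_twist 1 = 1%:M.
Proof. by rewrite /swap_twist subrr scale0r addr0. Qed.

Lemma swap_twistN1 : swap_twist (-1) = Uperm (tperm a b).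
Proof.
apply/matrixP => k l; rewrite swap_twistE swap_projE /swap_coord mxE.
rewrite -opprD mulNr mulrA mulfV ?pnatr_eq0 // mul1r.
case: tpermP => [->|->|/eqP la /eqP lb];
  rewrite ?eqxx ?(negPf ab) ?[b == a]eq_sym ?(negPf ab).
- by rewrite subr0 mulr1 opprB addrC subrK.
- by rewrite sub0r mulrN1 opprK addrC subrK.
- by rewrite (negPf la) (negPf lb) subrr mulr0 subr0.
Qed.

Lemma swap_proj_diag (d : 'I_n -> F) : d a = d b ->
  swap_proj *m diag_mx (\row_j d j) = diag_mx (\row_j d j) *m swap_proj.
Proof.
move=> dab; apply/matrixP => k l.
rewrite mul_mx_diag mul_diag_mx [LHS]mxE [RHS]mxE !swap_projE !mxE.
have coord_d m : swap_coord m * d m = swap_coord m * d a.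
  rewrite /swap_coord; have [->|_] := eqVneq m a; first by [].
  by have [->|_] := eqVneq m b; rewrite ?dab // subrr !mul0r.
transitivity (2^-1 * (swap_coord k * swap_coord l) * d a).
  by rewrite -!mulrA (coord_d l).
by rewrite [RHS]mulrC [swap_coord k * _]mulrC -!mulrA (coord_d k).
Qed.

Lemma swap_twist_diag (d : 'I_n -> F) z : d a = d b ->
  swap_twist z *m diag_mx (\row_j d j) = diag_mx (\row_j d j) *m swap_twist z.
Proof.
move=> dab; rewrite /swap_twist mulmxDl mulmxDr mul1mx mulmx1.
by rewrite -scalemxAl -scalemxAr swap_proj_diag.
Qed.

End SwapTwist.

Section UnitarySwapTwist.
Context {R : rcfType} {n : nat}.

Lemma adjmx_swap_twist (a b : 'I_n) (z : R[i]) :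
  adjmx (swap_twist a b z) = swap_twist a b z^*.
Proof.
apply/matrixP => k l; rewrite /adjmx 2![LHS]mxE !swap_twistE !swap_projE.
rewrite /swap_coord rmorphD !rmorphM !rmorphB rmorph1 !rmorph_nat.
by rewrite fmorphV rmorph_nat [l == k]eq_sym (mulrC ((l == a)%:R - _)).
Qed.

Lemma unitary_swap_twist {a b : 'I_n} {z : R[i]} :
  a != b -> z * z^* = 1 -> unitary_mx (swap_twist a b z).
Proof.
move=> ab zz; rewrite /unitary_mx adjmx_swap_twist !swap_twistM //.
by rewrite [_ * z]mulrC zz swap_twist1.
Qed.

End UnitarySwapTwist.

Section ComplexContinuity.
Context {R : realType} {T : topologicalType}.
Implicit Types f g : T -> R[i].

Lemma continuous_complex_add f g :
  continuous f -> continuous g -> continuous (fun x => f x + g x).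
Proof. by move=> fc gc x; apply: (@cvgD _ (R[i])^o); [exact: fc|exact: gc]. Qed.

Lemma continuous_complex_mul f g :
  continuous f -> continuous g -> continuous (fun x => f x * g x).
Proof. by move=> fc gc x; apply: cvgM; [exact: fc|exact: gc]. Qed.

Lemma continuous_complex_inv f :
  (forall x, f x != 0) -> continuous f -> continuous (fun x => (f x)^-1).
Proof. by move=> f0 fc x; apply: cvgV; [exact: f0|exact: fc]. Qed.

Lemma continuous_complex_sum (I : Type) (r : seq I) (F : I -> T -> R[i]) :
  (forall i, continuous (F i)) -> continuous (fun x => \sum_(i <- r) F i x).
Proof.
move=> Fc; apply: (@continuous_big _ _ +%R 0 xpredT) => [|i _]; last exact: Fc.
exact: (add_continuous : continuous (fun z : (R[i])^o * (R[i])^o => z.1 + z.2)).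
Qed.

Lemma continuous_conjc : continuous (@conjc R).
Proof.
move=> z; apply/(@cvgrPdist_lt _ (R[i])^o _ _ (nbhs_filter (z : (R[i])^o))).
move=> e e0; near=> w; rewrite -rmorphB normcJ; near: w.
exact: (@cvgr_dist_lt _ (R[i])^o _ (nbhs (z : (R[i])^o)) _ id z cvg_id e e0).
Unshelve. all: end_near.
Qed.

Lemma continuous_real_complex : continuous (fun r : R => r%:C : R[i]).
Proof.
move=> r; apply/(@cvgrPdist_lt _ (R[i])^o) => e.
rewrite ltcE /= => /andP[/eqP Ie Re0].
near=> s; rewrite -rmorphB normc_def /= expr0n /= addr0 sqrtr_sqr.
rewrite [X in _ < X]complexE Ie mulr0 addr0 ltcR; near: s.
exact: (@cvgrPdist_lt _ _ _ (nbhs r) _ id r).1 cvg_id _ Re0.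
Unshelve. all: end_near.
Qed.

End ComplexContinuity.

Section CirclePath.
Context {R : realType}.
Implicit Type t : R.

Definition quarter_path t : R[i] := (1 - t)%:C + 'i * t%:C.

(* w / w^* = w^2 / |w|^2 doubles the argument of w, so as quarter_path runs
   from 1 to 'i, circle_path runs along the unit circle from 1 to -1. *)
Definition circle_path t : R[i] := quarter_path t / (quarter_path t)^*%C.

Lemma quarter_pathE t : quarter_path t = ((1 - t) +i* t).
Proof. by rewrite /quarter_path; simpc. Qed.

Lemma quarter_path_neq0 t : quarter_path t != 0.
Proof.
rewrite quarter_pathE eq_complex /= negb_and.
by have [->|] := eqVneq t 0; rewrite ?subr0 ?oner_neq0 ?orbT.
Qed.

Lemma circle_path_unit t : circle_path t * (circle_path t)^* = 1.
Proof.
rewrite -normCK /circle_path normf_div normcJ divff ?expr1n //.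
by rewrite normr_eq0 quarter_path_neq0.
Qed.

Lemma circle_path0 : circle_path 0 = 1.
Proof. by rewrite /circle_path quarter_pathE subr0 conjc1 divr1. Qed.

Lemma circle_path1 : circle_path 1 = -1.
Proof.
have -> : circle_path 1 = 'i / - 'i.
  by rewrite /circle_path quarter_pathE subrr; congr (_ / _); simpc.
by rewrite invrN mulrN divff ?neq0Ci.
Qed.

Lemma continuous_quarter_path : continuous quarter_path.
Proof.
have one_minus : continuous (fun t : R => 1 - t).
  by move=> t; apply: cvgB; [exact: cvg_cst|exact: cvg_id].
apply: continuous_complex_add => [t|].
  by apply: continuous_comp (one_minus t) _; exact: continuous_real_complex.
apply: continuous_complex_mul => [t|]; first exact: cvg_cst.
exact: continuous_real_complex.
Qed.

Lemma continuous_circle_path : continuous circle_path.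
Proof.
apply: continuous_complex_mul; first exact: continuous_quarter_path.
apply: continuous_complex_inv => [t|t].
  by rewrite conjc_eq0 quarter_path_neq0.
by apply: continuous_comp (continuous_quarter_path t) _; exact: continuous_conjc.
Qed.

End CirclePath.

Section MatrixContinuity.
Context {R : realType} {T : topologicalType} {n : nat}.

Definition continuous_mx (v : T -> 'M[R[i]]_n) :=
  forall k l, continuous (fun x => v x k l).

Lemma continuous_mx_cst (M : 'M[R[i]]_n) : continuous_mx (fun _ => M).
Proof. by move=> k l x; exact: cvg_cst. Qed.

Lemma continuous_mulmx (u v : T -> 'M[R[i]]_n) :
  continuous_mx u -> continuous_mx v -> continuous_mx (fun x => u x *m v x).
Proof.
move=> uc vc k l; have -> : (fun x => (u x *m v x) k l) =
    (fun x => \sum_(j <- index_enum 'I_n) u x k j * v x j l).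
  by apply/funext => x; rewrite mxE.
by apply: continuous_complex_sum => j; exact: continuous_complex_mul.
Qed.

Lemma continuous_swap_twist (a b : 'I_n) (z : T -> R[i]) :
  continuous z -> continuous_mx (fun x => swap_twist a b (z x)).
Proof.
move=> zc k l; have -> : (fun x => swap_twist a b (z x) k l) =
    (fun x => (k == l)%:R + (z x - 1) * swap_proj a b k l).
  by apply/funext => x; rewrite swap_twistE.
apply: continuous_complex_add => [x|]; first exact: cvg_cst.
apply: continuous_complex_mul => [|x]; last exact: cvg_cst.
by apply: continuous_complex_add zc _ => x; exact: cvg_cst.
Qed.

End MatrixContinuity.

Section PermUnitaryPath.
Context {R : realType} {n : nat} {T : topologicalType}.
Variables (z : T -> R[i]) (lambda : 'I_n -> T -> R[i]).
Hypotheses (z_cont : continuous z) (z_unit : forall x, z x * (z x)^* = 1).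

Definition perm_unitary_path (s : 'S_n) (v : T -> 'M[R[i]]_n) : Prop :=
  [/\ continuous_mx v, forall x, unitary_mx (v x),
      forall x, z x = 1 -> v x = 1%:M,
      forall x, z x = -1 -> v x = Uperm s &
      forall x, (forall k, lambda k x = lambda (s k) x) ->
        v x *m diagC (lambda^~ x) = diagC (lambda^~ x) *m v x].

Lemma perm_unitary_path1 : perm_unitary_path 1 (fun _ => 1%:M).
Proof.
split=> [|x|x _|x _|x _].
- exact: continuous_mx_cst.
- exact: unitary_mx1.
- by [].
- by rewrite Uperm1.
- by rewrite mul1mx mulmx1.
Qed.

Lemma perm_unitary_path_tperm (s : 'S_n) a v : s a != a ->
  perm_unitary_path (s * tperm a (s a)) v ->
  perm_unitary_path s (fun x => swap_twist a (s a) (z x) *m v x).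
Proof.
rewrite eq_sym => sa [vc vu v1 vs vcomm]; split=> [|x|x zx|x zx|x ls].
- by apply: continuous_mulmx vc; exact: continuous_swap_twist.
- exact: unitary_mxM (unitary_swap_twist sa (z_unit x)) (vu x).
- by rewrite zx swap_twist1 mul1mx v1.
- by rewrite zx swap_twistN1 // vs // -UpermM -mulgA tperm2 mulg1.
have l_tperm y : lambda (tperm a (s a) y) x = lambda y x.
  by have lsa := ls a; case: tpermP => // ->; rewrite lsa.
have ls' k : lambda k x = lambda ((s * tperm a (s a))%g k) x.
  by rewrite permM l_tperm ls.
rewrite -mulmxA (vcomm x ls') !mulmxA /diagC.
by rewrite (swap_twist_diag _ _ _ _ (ls a)).
Qed.

Lemma perm_unitary_path_exists (s : 'S_n) : exists v, perm_unitary_path s v.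
Proof.
elim/perm_tperm_ind: s => [|s a sa [v sv]].
  by exists (fun _ => 1%:M); exact: perm_unitary_path1.
by eexists; exact: perm_unitary_path_tperm sv.
Qed.

End PermUnitaryPath.

Theorem lemma2p5 (R : realType) (n : nat) (sigma : 'S_n)
    (X : metricType R) (A B : set X)
    (hA0 : A !=set0) (hB0 : B !=set0) (hAB : A `&` B = set0)
    (hAc : closed A) (hBc : closed B)
    (lambda : 'I_n -> X -> R[i])
    (hl : forall k, continuous (lambda k)) :
  exists v : X -> 'M[R[i]]_n,
    (forall k l, continuous (fun x => v x k l)) /\
    (forall x, unitary_mx (v x)) /\
    (forall x, A x -> v x = 1%:M) /\
    (forall x, B x -> v x = Uperm sigma :> 'M[R[i]]_n) /\
    (forall x, (forall k, lambda k x = lambda (sigma k) x) ->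
       v x *m diagC (fun k => lambda k x) = diagC (fun k => lambda k x) *m v x).
Proof.
have /(@uniform_separatorP _ R) [f [fc _ fA fB]] :=
  (@normal_separatorP R X).1 pseudometric_normal A B hAc hBc hAB.
have zc : continuous (fun x => circle_path (f x)).
  by move=> x; apply: continuous_comp (fc x) _; exact: continuous_circle_path.
have [v [vc vu v1 vs vcomm]] :=
  perm_unitary_path_exists _ lambda zc (fun x => circle_path_unit (f x)) sigma.
exists v; split; first exact: vc.
split; first exact: vu.
split.
  move=> x Ax; apply: v1; have -> : f x = 0 by apply: fA; exists x.
  exact: circle_path0.
split; last exact: vcomm.
move=> x Bx; apply: vs; have -> : f x = 1 by apply: fB; exists x.
exact: circle_path1.
Qed.
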